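(* Let $\theta\in\mathrm{Irr}(N)$, let $N\le K\le\mathrm{Stab}_G(\theta)$, and let $\hat\theta$ be a strong extension of $\theta$ to $K$. Then for every $x\in K$ there exists $n\in N$ such that $\hat\theta(xn)\neq0$. Consequently, if $N\le L\le\mathrm{Stab}_G(\tilde\theta)$ normalises $K$, $g\in L$, $\psi_g\in\mathrm{Lin}(G)$ satisfies ${}^g\theta=\theta\,\psi_g|_N$, and $\mu:K\to\mathbb{C}^\times$ is a function constant on cosets of $N$ with ${}^g\hat\theta=\hat\theta\cdot\psi_g|_K\cdot\mu$, then $\mu$ is uniquely determined by $gN$, $\hat\theta$ and $\psi_g|_K$.
   Context: $G$ is a profinite group, $N$ an open normal subgroup; $\mathrm{Irr}$ and $\mathrm{Lin}$ denote continuous irreducible, resp. degree-one, complex characters. $\tilde\theta$ denotes the $G$-twist class $\{\theta\psi|_N:\psi\in\mathrm{Lin}(G)\}$ of $\theta\in\mathrm{Irr}(N)$, and $G$ acts on these classes via conjugation ${}^g\theta(n)=\theta(g^{-1}ng)$. A projective representation of $K$ is a map $\Pi:K\to\mathrm{GL}_m(\mathbb{C})$ with $\Pi(x)\Pi(y)=\alpha(x,y)\Pi(xy)$ for a 2-cocycle $\alpha:K\times K\to\mathbb{C}^\times$ (its factor set); its projective character is $x\mapsto\mathrm{Tr}\,\Pi(x)$. If $\Theta$ is a representation of $N$ affording $\theta$ and $K$ fixes $\theta$, a strong extension of $\Theta$ to $K$ is a projective representation $\Pi$ of $K$ with $\Pi(xn)=\Pi(x)\Theta(n)$ and $\Pi(nx)=\Theta(n)\Pi(x)$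 for all $x\in K$, $n\in N$; a strong extension of $\theta$ to $K$ is the projective character of such a $\Pi$. For a function $f$ on $K$, ${}^gf(x)=f(g^{-1}xg)$; products of functions are pointwise. *)

From HB Require Import structures.
From mathcomp Require Import all_boot all_order all_algebra.
From mathcomp Require Import all_classical all_reals topology normedtype.
From mathcomp Require Import complex.
Set Implicit Arguments. Unset Strict Implicit. Unset Printing Implicit Defensive.
Import Order.TTheory GRing.Theory Num.Theory.
Import numFieldTopology.Exports numFieldNormedType.Exports.
Local Open Scope ring_scope.
Local Open Scope classical_set_scope.
Local Open Scope complex_scope.

(* The complex numbers: R[i] for a realType R, viewed through the regular-
   algebra alias ^o so that it carries its (modulus) metric topology. *)
Notation Cplx R := ((complex R)^o).

Record profiniteGroup := ProfiniteGroup {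
  pg_carrier :> topologicalType;
  pg_mul : pg_carrier -> pg_carrier -> pg_carrier;
  pg_inv : pg_carrier -> pg_carrier;
  pg_one : pg_carrier;
  pg_mulA : forall x y z, pg_mul x (pg_mul y z) = pg_mul (pg_mul x y) z;
  pg_mul1 : forall x, pg_mul pg_one x = x;
  pg_mulV : forall x, pg_mul (pg_inv x) x = pg_one;
  pg_mul_cont : continuous (fun p : pg_carrier * pg_carrier => pg_mul p.1 p.2);
  pg_inv_cont : continuous pg_inv;
  pg_compact : compact [set: pg_carrier];
  pg_hausdorff : hausdorff_space pg_carrier;
  pg_tdisc : totally_disconnected [set: pg_carrier]
}.

Declare Scope pg_scope.
Section Defs.
Variable G : profiniteGroup.
Local Notation "x * y" := (pg_mul x y) : pg_scope.
Local Notation "x ^-1" := (pg_inv x) : pg_scope.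
Delimit Scope pg_scope with pg.

Definition is_subgroup (H : set G) : Prop :=
  [/\ H (pg_one G),
      (forall x y, H x -> H y -> H (x * y)%pg) &
      (forall x, H x -> H (x^-1)%pg)].

Definition is_normal (N : set G) : Prop :=
  is_subgroup N /\ (forall g n, N n -> N ((g^-1) * n * g)%pg).

Definition is_open_normal (N : set G) : Prop := open N /\ is_normal N.

Definition conjf (T : Type) (g : G) (f : G -> T) : G -> T :=
  fun x => f ((g^-1) * x * g)%pg.

Variable R : realType.
Local Notation C := (Cplx R).

(* A continuous (finite-dimensional, complex) representation of the
   subgroup H, given as a map on G of which only the values on H matter. *)
Definition is_cont_rep (H : set G) (m : nat) (Theta : G -> 'M[C]_m) : Prop :=
  [/\ {within H, continuous Theta},
      Theta (pg_one G) = 1%:M &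
      (forall x y, H x -> H y -> Theta (x * y)%pg = Theta x *m Theta y)].

Definition is_irr_rep (H : set G) (m : nat) (Theta : G -> 'M[C]_m) : Prop :=
  [/\ is_cont_rep H Theta, (0 < m)%N &
      forall U : 'M[C]_m, (forall h, H h -> (U *m Theta h <= U)%MS) ->
        U = 0 \/ (U == 1%:M)%MS].

Definition afforded (m : nat) (Theta : G -> 'M[C]_m) : G -> C :=
  fun x => \tr (Theta x).

Definition is_lin_char (psi : G -> C) : Prop :=
  [/\ continuous psi, psi (pg_one G) = 1 &
      forall x y, psi (x * y)%pg = psi x * psi y].

Definition is_proj_rep (K : set G) (m : nat) (Pi : G -> 'M[C]_m)
    (alpha : G -> G -> C) : Prop :=
  [/\ (forall x, K x -> Pi x \in unitmx),
      (forall x y, K x -> K y -> alpha x y != 0),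
      (forall x y z, K x -> K y -> K z ->
          alpha x y * alpha (x * y)%pg z = alpha y z * alpha x (y * z)%pg) &
      (forall x y, K x -> K y -> Pi x *m Pi y = alpha x y *: Pi (x * y)%pg)].

Definition is_strong_ext (N K : set G) (m : nat) (Theta Pi : G -> 'M[C]_m) :=
  (exists alpha, is_proj_rep K Pi alpha) /\
  (forall x n, K x -> N n ->
     Pi (x * n)%pg = Pi x *m Theta n /\ Pi (n * x)%pg = Theta n *m Pi x).

Definition stab (N : set G) (theta : G -> C) : set G :=
  [set g | forall n, N n -> conjf g theta n = theta n].

Definition stab_twist (N : set G) (theta : G -> C) : set G :=
  [set g | exists psi, is_lin_char psi /\
     (forall n, N n -> conjf g theta n = theta n * psi n)].

End Defs.

From HB Require Import structures.
From mathcomp Require Import all_boot all_order all_algebra.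
From mathcomp Require Import all_classical all_reals topology normedtype.
From mathcomp Require Import complex.
Import Order.TTheory GRing.Theory Num.Theory.
Import numFieldTopology.Exports numFieldNormedType.Exports.
Local Open Scope ring_scope.
Local Open Scope classical_set_scope.
Local Open Scope complex_scope.

Set Implicit Arguments. Unset Strict Implicit. Unset Printing Implicit Defensive.

(* By Burnside's theorem the matrices Theta(n), n in N, span all of M_m(C):
   the span acts transitively on nonzero row vectors, hence contains a rank
   one matrix, and then the trace form against an invertible matrix cannot
   vanish on it.  Applied to Pi(x), which is invertible, this gives some n
   with tr(Pi(x) Theta(n)) = tr Pi(xn) <> 0.
   For uniqueness, conjugation by an element of N fixes the trace of Pi on K,
   so ^g tr Pi depends only on gN; comparing the two factorisations at such a
   point xn and using that psi is nowhere zero and mu is constant on cosets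
   of N gives mu1(x) = mu2(x). *)

Delimit Scope pg_scope with pg.
Local Notation "x * y" := (pg_mul x y) : pg_scope.
Local Notation "x ^-1" := (pg_inv x) : pg_scope.

Lemma linear_pred_row_space (F : fieldType) (n : nat) (S : 'rV[F]_n -> Prop) :
  S 0 -> (forall u v, S u -> S v -> S (u + v)) ->
  (forall a u, S u -> S (a *: u)) ->
  exists U : 'M[F]_n, forall v, S v <-> (v <= U)%MS.
Proof.
move=> S0 SD SZ.
pose spanned (r : nat) := `[< exists k (U : 'M[F]_(k, n)),
  (forall i, S (row i U)) /\ \rank U = r >].
have spanned0 : exists r, spanned r.
  by exists 0%N; apply/asboolP; exists 0%N, 0; split=> [[]|]; rewrite ?mxrank0.
have spanned_le r : spanned r -> (r <= n)%N.
  by move=> /asboolP[k [U [_ <-]]]; exact: rank_leq_col.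
(* A family of rows of S of maximal rank spans S. *)
case: (ex_maxnP spanned0 spanned_le) => r /asboolP[k [U [SU rU]]] max_r.
exists <<U>>%MS => v; rewrite genmxE; split=> [Sv|/submxP[D ->]]; last first.
  rewrite mulmx_sum_row; elim/big_ind: _ => // i _; exact: SZ.
apply/contraT => vU.
have SUv : spanned (\rank (col_mx U v)).
  apply/asboolP; exists (k + 1)%N, (col_mx U v); split=> // i.
  rewrite -(fintype.splitK i); case: (fintype.split i) => j /=.
    by rewrite rowKu.
  by rewrite rowKd [j]ord1 (_ : row 0 v = v) //; apply/rowP => z; rewrite mxE.
suff: (\rank U < \rank (col_mx U v))%N by rewrite ltnNge rU max_r.
rewrite -addsmxE; apply: rank_ltmx; rewrite ltmxE addsmxSl /=.
by apply: contra vU => /(submx_trans (addsmxSr U v)).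
Qed.

Lemma stablemx_eigenvector (F : closedFieldType) (n : nat) (V f : 'M[F]_n) :
  V != 0 -> stablemx V f ->
  exists a, exists2 v : 'rV_n, v != 0 & (v <= V)%MS && (v *m f == a *: v).
Proof.
move=> V0 Vf; have Bf : stablemx (row_base V) f by rewrite stablemx_row_base.
have [a] : exists a, root (char_poly (restrictmx V f)) a.
  by apply/closed_rootP; rewrite size_char_poly eqSS mxrank_eq0.
rewrite -eigenvalue_root_char => /eigenvalueP[w /eigenspaceP wf w0].
exists a, (w *m row_base V); first by rewrite mulmx_free_eq0 ?row_base_free.
have /eigenspaceP-> : (w *m row_base V <= eigenspace f a)%MS.
  by rewrite -sub_eigenspace_conjmx ?row_base_free //; apply/eigenspaceP.
by rewrite eqxx andbT (submx_trans (submxMl _ _)) ?eq_row_base.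
Qed.

Lemma mxrank_mul_ltn (F : fieldType) (m n p : nat) (T : 'M[F]_(m, n))
    (A : 'M[F]_(n, p)) (v : 'rV_n) :
  v != 0 -> (v <= T)%MS -> v *m A = 0 -> (\rank (T *m A) < \rank T)%N.
Proof.
move=> v0 vT vA; rewrite ltn_neqAle mxrankM_maxl andbT.
apply: contra v0 => /eqP rTA.
have freeBA : row_free (row_base T *m A).
  by rewrite /row_free (eqmxMr _ (eq_row_base T)) rTA.
move: vT vA; rewrite -(eq_row_base T) => /submxP[w ->].
by rewrite -mulmxA => /eqP; rewrite !mulmx_free_eq0 ?row_base_free.
Qed.

Lemma mx_neq0_row (R : nmodType) (m n : nat) (T : 'M[R]_(m, n)) :
  T != 0 -> exists i, row i T != 0.
Proof.
move=> T0; apply/existsP; rewrite -negb_forall; apply: contra T0 => /forallP T0.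
by apply/eqP/row_matrixP => i; rewrite row0; apply/eqP.
Qed.

Section MxSpan.
Variables (F : fieldType) (n : nat) (P : 'M[F]_n -> Prop).

Inductive mx_span : 'M[F]_n -> Prop :=
| mx_span_gen X : P X -> mx_span X
| mx_span_add X Y : mx_span X -> mx_span Y -> mx_span (X + Y)
| mx_span_scale a X : mx_span X -> mx_span (a *: X).

Hypothesis mulP : forall A B, P A -> P B -> P (A *m B).

Lemma mx_span_mulr X Y : mx_span X -> P Y -> mx_span (X *m Y).
Proof.
move=> EX PY; elim: EX => [A PA | A B _ EA _ EB | a A _ EA].
- by apply: mx_span_gen; apply: mulP.
- by rewrite mulmxDl; apply: mx_span_add.
- by rewrite -scalemxAl; apply: mx_span_scale.
Qed.

Lemma mx_span_mul X Y : mx_span X -> mx_span Y -> mx_span (X *m Y).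
Proof.
move=> EX; elim=> [A PA | A B _ EA _ EB | a A _ EA].
- exact: mx_span_mulr.
- by rewrite mulmxDr; apply: mx_span_add.
- by rewrite -scalemxAr; apply: mx_span_scale.
Qed.

Hypothesis P1 : P 1%:M.
Hypothesis irrP : forall U : 'M[F]_n,
  (forall Y, P Y -> (U *m Y <= U)%MS) -> U = 0 \/ (U == 1%:M)%MS.

Lemma mx_span_transitive (u v : 'rV[F]_n) :
  u != 0 -> exists2 X, mx_span X & u *m X = v.
Proof.
move=> u0; pose S w := exists2 X, mx_span X & u *m X = w.
have [U defU] : exists U : 'M[F]_n, forall w, S w <-> (w <= U)%MS.
  apply: linear_pred_row_space.
  - by exists (0 *: 1%:M); [apply/mx_span_scale/mx_span_gen | rewrite scale0r mulmx0].
  - move=> _ _ [X EX <-] [Y EY <-].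
    by exists (X + Y); [apply: mx_span_add | rewrite mulmxDr].
  - by move=> a _ [X EX <-]; exists (a *: X); [apply: mx_span_scale | rewrite scalemxAr].
have Su : S u by exists 1%:M; [apply: mx_span_gen | rewrite mulmx1].
have [U0 | /eqmxP U1] : U = 0 \/ (U == 1%:M)%MS.
- apply: irrP => Y PY; apply/row_subP => i; rewrite row_mul; apply/defU.
  have [X EX uX] : S (row i U) by apply/defU; apply: row_sub.
  by exists (X *m Y); [apply: mx_span_mulr | rewrite mulmxA uX].
- by move/defU: Su; rewrite U0 submx0 (negPf u0).
- by apply/defU; rewrite U1 submx1.
Qed.

End MxSpan.

Section Burnside.
Variables (F : closedFieldType) (n : nat) (P : 'M[F]_n -> Prop).
Hypothesis mulP : forall A B, P A -> P B -> P (A *m B).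
Hypothesis P1 : P 1%:M.
Hypothesis irrP : forall U : 'M[F]_n,
  (forall Y, P Y -> (U *m Y <= U)%MS) -> U = 0 \/ (U == 1%:M)%MS.

(* With A sending row i1 of T to the i2-th unit vector and a an eigenvalue of
   A T on the row space of T, T A T - a T loses rank yet keeps the nonzero
   row  row i2 T - a row i1 T. *)
Lemma mx_span_rank_drop T : mx_span P T -> (1 < \rank T)%N ->
  exists2 T', mx_span P T' & (0 < \rank T' < \rank T)%N.
Proof.
move=> ET rT; have T0 : T != 0 by rewrite -mxrank_eq0 -lt0n ltnW.
have [i1 Ti1] := mx_neq0_row T0.
have [i2 Ti2] : exists i, ~~ (row i T <= row i1 T)%MS.
  apply/existsP; rewrite -negb_forall; apply: contraTN rT => /forallP/row_subP sT.
  by rewrite -leqNgt (leq_trans (mxrankS sT)) // rank_rV leq_b1.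
have [A EA i1A] := mx_span_transitive mulP P1 irrP (delta_mx 0 i2) Ti1.
have AT_stable : stablemx T (A *m T) by rewrite mulmxA submxMl.
have [a [v v0 /andP[vT /eqP vAT]]] := stablemx_eigenvector T0 AT_stable.
exists (T *m (A *m T - a%:M)).
  rewrite mulmxBr mul_mx_scalar -scaleNr.
  by apply: mx_span_add; [apply/mx_span_mul/mx_span_mul | apply: mx_span_scale].
rewrite (mxrank_mul_ltn v0 vT) ?andbT; last by rewrite mulmxBr vAT mul_mx_scalar subrr.
rewrite lt0n mxrank_eq0; apply: contra Ti2 => /eqP T'0.
have : row i1 (T *m (A *m T - a%:M)) = 0 by rewrite T'0 row0.
rewrite row_mul mulmxBr mulmxA i1A -rowE mul_mx_scalar => /eqP.
by rewrite subr_eq0 => /eqP->; rewrite scalemx_sub.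
Qed.

Lemma mx_span_rank_one : (0 < n)%N -> exists2 T, mx_span P T & \rank T = 1%N.
Proof.
move=> n_gt0; suff: forall r T, mx_span P T -> \rank T = r -> (0 < r)%N ->
    exists2 T1, mx_span P T1 & \rank T1 = 1%N.
  by apply; [apply: mx_span_gen P1 | apply: mxrank1 | ].
elim/ltn_ind=> r IHr T ET rTr rT; rewrite -{}rTr in IHr rT.
have [rT1 | rT1] := ltnP 1 (\rank T).
  have [T' ET' /andP[rT' lt]] := mx_span_rank_drop ET rT1.
  exact: IHr lt T' ET' erefl rT'.
by exists T => //; apply/eqP; rewrite eqn_leq rT1.
Qed.

Lemma mx_span_trace_nondegenerate A : (0 < n)%N -> A \in unitmx ->
  exists2 X, mx_span P X & \tr (A *m X) != 0.
Proof.
move=> n_gt0 uA; apply: contrapT => trA0.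
have {}trA0 X : mx_span P X -> \tr (A *m X) = 0.
  by move=> EX; apply: contrapT => /eqP trX; apply: trA0; exists X.
have [T ET rT] := mx_span_rank_one n_gt0.
have T0 : T != 0 by rewrite -mxrank_eq0 rT.
have [i Ti] := mx_neq0_row T0.
have /submxP[D defT] : (T <= row i T)%MS.
  by have := mxrank_leqif_sup (row_sub i T) => -[_ <-]; rewrite rank_rV Ti rT.
have AD0 : A *m D = 0.
  apply/row_matrixP => j; rewrite row0 rowE.
  have [Y EY <-] := mx_span_transitive mulP P1 irrP (delta_mx 0 j) Ti.
  have : \tr (row i T *m Y *m (A *m D)) = 0.
    by rewrite mxtrace_mulC -mulmxA (mulmxA D) -defT trA0 //; apply: mx_span_mul.
  rewrite /mxtrace big_ord1 => tr0.
  by apply/matrixP => k l; rewrite !ord1 tr0 mxE.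
by move: T0; rewrite defT -(mulKmx uA D) AD0 mulmx0 mul0mx eqxx.
Qed.

Lemma irr_mx_trace_neq0 A : (0 < n)%N -> A \in unitmx ->
  exists2 Y, P Y & \tr (A *m Y) != 0.
Proof.
move=> n_gt0 uA; have [X EX /eqP trAX] := mx_span_trace_nondegenerate n_gt0 uA.
apply: contrapT => trP0; apply: trAX.
elim: EX => [Y PY | Y Z _ trY _ trZ | a Y _ trY].
- by apply: contrapT => /eqP trY; apply: trP0; exists Y.
- by rewrite mulmxDr mxtraceD trY trZ addr0.
- by rewrite -scalemxAr mxtraceZ trY mulr0.
Qed.

End Burnside.

Section ProfiniteGroupFacts.
Variable G : profiniteGroup.
Local Open Scope pg_scope.

Lemma pg_mulgV (x : G) : x * x^-1 = pg_one G.
Proof.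
rewrite -[x * x^-1]pg_mul1 -(pg_mulV x^-1) -pg_mulA (pg_mulA x^-1).
by rewrite pg_mulV pg_mul1.
Qed.

Lemma pg_mulg1 (x : G) : x * pg_one G = x.
Proof. by rewrite -(pg_mulV x) pg_mulA pg_mulgV pg_mul1. Qed.

Lemma pg_mulKVg (x y : G) : x * (x^-1 * y) = y.
Proof. by rewrite pg_mulA pg_mulgV pg_mul1. Qed.

Lemma pg_invMg (x y : G) : (x * y)^-1 = y^-1 * x^-1.
Proof.
have xyK : (x * y) * (y^-1 * x^-1) = pg_one G.
  by rewrite -pg_mulA pg_mulKVg pg_mulgV.
by rewrite -[LHS]pg_mulg1 -xyK pg_mulA pg_mulV pg_mul1.
Qed.

Lemma conjfM (T : Type) (f : G -> T) (g h x : G) :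
  conjf (g * h) f x = conjf h f (g^-1 * x * g).
Proof. by rewrite /conjf pg_invMg -!pg_mulA. Qed.

End ProfiniteGroupFacts.

Lemma lin_char_neq0 (R : realType) (G : profiniteGroup) (psi : G -> Cplx R) x :
  is_lin_char psi -> psi x != 0.
Proof.
case=> _ psi1 psiM; apply/eqP => psi_x0.
by move: (psiM (pg_inv x) x); rewrite pg_mulV psi1 psi_x0 mulr0; apply/eqP/oner_neq0.
Qed.

Section StrongExtension.
Variables (R : realType) (G : profiniteGroup) (N K : set G) (m : nat).
Variables (Theta Pi : G -> 'M[Cplx R]_m).

Hypothesis subN : is_subgroup N.
Hypothesis subK : is_subgroup K.
Hypothesis sNK : N `<=` K.
Hypothesis repTheta : is_cont_rep N Theta.
Hypothesis extPi : is_strong_ext N K Theta Pi.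

Lemma afforded_strong_ext_conjN h k :
  N h -> K k -> conjf h (afforded Pi) k = afforded Pi k.
Proof.
move=> Nh Kk; have [_ Nmul Ninv] := subN; have [_ Kmul _] := subK.
have [_ Theta1 ThetaM] := repTheta; have [_ PiN] := extPi.
rewrite /conjf /afforded -pg_mulA.
have NhV := Ninv _ Nh; have [_ ->] := PiN _ _ (Kmul _ _ Kk (sNK Nh)) NhV.
have [-> _] := PiN _ _ Kk Nh.
by rewrite mxtrace_mulC -mulmxA -ThetaM // (pg_mulgV h) Theta1 mulmx1.
Qed.

Lemma afforded_strong_ext_coset_neq0 x : is_irr_rep N Theta ->
  K x -> exists n, N n /\ afforded Pi (x * n)%pg != 0.
Proof.
move=> [_ m_gt0 irr] Kx; have [N1 Nmul _] := subN; have [_ Theta1 ThetaM] := repTheta.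
have [[_ [Pi_unit _ _ _]] PiN] := extPi.
pose P X := exists2 n, N n & X = Theta n.
have mulP A B : P A -> P B -> P (A *m B).
  by move=> [a Na ->] [b Nb ->]; exists (a * b)%pg; [apply: Nmul | rewrite ThetaM].
have P1 : P 1%:M by exists (pg_one G).
have irrP (U : 'M_m) : (forall Y, P Y -> (U *m Y <= U)%MS) -> U = 0 \/ (U == 1%:M)%MS.
  by move=> sU; apply: irr => h Nh; apply: sU; exists h.
have [_ [n Nn ->] trPin] := irr_mx_trace_neq0 mulP P1 irrP m_gt0 (Pi_unit x Kx).
by exists n; split; rewrite // /afforded (proj1 (PiN _ _ Kx Nn)).
Qed.

Lemma afforded_twist_factor_unique (g1 g2 : G) (psi1 psi2 mu1 mu2 : G -> Cplx R) :
  is_irr_rep N Theta -> (forall k, K k -> K (g1^-1 * k * g1)%pg) -> N (g1^-1 * g2)%pg ->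
  is_lin_char psi2 -> (forall x, K x -> psi1 x = psi2 x) ->
  (forall x n, K x -> N n -> mu1 (x * n)%pg = mu1 x) ->
  (forall x n, K x -> N n -> mu2 (x * n)%pg = mu2 x) ->
  (forall x, K x -> conjf g1 (afforded Pi) x = afforded Pi x * psi1 x * mu1 x) ->
  (forall x, K x -> conjf g2 (afforded Pi) x = afforded Pi x * psi2 x * mu2 x) ->
  forall x, K x -> mu1 x = mu2 x.
Proof.
move=> irrTheta nKg1 Ng12 lin2 psi12 mu1N mu2N conj1 conj2 x Kx.
have [n [Nn Pi_xn]] := afforded_strong_ext_coset_neq0 irrTheta Kx.
have [_ Kmul _] := subK; have Kxn := Kmul _ _ Kx (sNK Nn).
have conj12 : conjf g1 (afforded Pi) (x * n)%pg = conjf g2 (afforded Pi) (x * n)%pg.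
  by rewrite -(pg_mulKVg g1 g2) conjfM [RHS]afforded_strong_ext_conjN //; apply: nKg1.
rewrite -(mu1N x n) // -(mu2N x n) //.
move: (conj2 _ Kxn); rewrite -conj12 conj1 // psi12 // -!mulrA.
by move/(mulfI Pi_xn)/(mulfI (lin_char_neq0 _ lin2)).
Qed.

End StrongExtension.

Theorem lemma2p6 (R : realType) (G : profiniteGroup) (N K : set G) (m : nat)
  (Theta Pi : G -> 'M[Cplx R]_m) :
  is_open_normal N ->
  is_irr_rep N Theta ->
  is_subgroup K -> N `<=` K -> K `<=` stab N (afforded Theta) ->
  is_strong_ext N K Theta Pi ->
  (forall x, K x -> exists n, N n /\ afforded Pi (pg_mul x n) != 0) /\
  (forall (L : set G) (g1 g2 : G) (psi1 psi2 mu1 mu2 : G -> Cplx R),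
     is_subgroup L -> N `<=` L -> L `<=` stab_twist N (afforded Theta) ->
     (forall l k, L l -> K k -> K (pg_mul (pg_mul (pg_inv l) k) l)) ->
     L g1 -> L g2 -> N (pg_mul (pg_inv g1) g2) ->
     is_lin_char psi1 -> is_lin_char psi2 ->
     (forall x, K x -> psi1 x = psi2 x) ->
     (forall n, N n -> conjf g1 (afforded Theta) n = afforded Theta n * psi1 n) ->
     (forall n, N n -> conjf g2 (afforded Theta) n = afforded Theta n * psi2 n) ->
     (forall x, K x -> mu1 x != 0) -> (forall x, K x -> mu2 x != 0) ->
     (forall x n, K x -> N n -> mu1 (pg_mul x n) = mu1 x) ->
     (forall x n, K x -> N n -> mu2 (pg_mul x n) = mu2 x) ->
     (forall x, K x ->
        conjf g1 (afforded Pi) x = afforded Pi x * psi1 x * mu1 x) ->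
     (forall x, K x ->
        conjf g2 (afforded Pi) x = afforded Pi x * psi2 x * mu2 x) ->
     forall x, K x -> mu1 x = mu2 x).
Proof.
move=> [_ [subN _]] irrTheta subK sNK _ extPi; have [repTheta _ _] := irrTheta.
split=> [x|L g1 g2 psi1 psi2 mu1 mu2 _ _ _ nKL Lg1 _ Ng12 _ lin2 psi12 _ _ _ _].
  exact: afforded_strong_ext_coset_neq0 subN repTheta extPi x irrTheta.
by apply: (afforded_twist_factor_unique subN subK sNK repTheta extPi) => // k; apply: nKL.
Qed.
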